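(* Let $d\ge2$, $\kappa,l,\lambda>0$, $k\in\{0,1\}$, $\mu>0$, $\varphi_o>0$. Suppose $\varphi:[0,\infty)\to(0,\infty)$ is continuous with $\varphi(0)=\varphi_o$, $\lim_{u\to\infty}\varphi(u)=0$, and for all $u\ge0$ $$\int_{\varphi_o}^{\varphi(u)}\frac{d\bar\varphi}{\sqrt{\frac{d(d-1)}{\kappa^2l^2}\mu+k\frac{(d-1)^2}{4l^2}\bar\varphi^2+\lambda\bar\varphi^{\frac{2(d+1)}{d-1}}}}=-l\int_0^u\frac{d\bar u}{\sqrt{1+k\bar u^2+\mu\bar u^{d+1}}}$$ (i.e. the domain wall solution of the conformally coupled scalar with these parameters is regular, $u$ ranging over $[0,\infty)$). Then necessarily $$\lambda<\Big(\frac{(d-1)^d\kappa^2}{2^{d+1}d\,l^{d-1}}\Big)^{\frac2{d-1}}.$$ In particular no such regular solution exists for $d=2$ with $\sqrt\lambda=\kappa^2/(16l)$, nor for $d=3$ with $\lambda=\kappa^2/(6l^2)$. *)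

From Stdlib Require Import Reals.
From Coquelicot Require Export Coquelicot.
Export Reals.
Open Scope R_scope.

Definition lhs_integrand (d : nat) (kappa l lambda k mu : R) (phib : R) : R :=
  / sqrt (INR d * (INR d - 1) / (kappa ^ 2 * l ^ 2) * mu
          + k * ((INR d - 1) ^ 2 / (4 * l ^ 2)) * phib ^ 2
          + lambda * Rpower phib (2 * (INR d + 1) / (INR d - 1))).

Definition rhs_integrand (d : nat) (k mu : R) (ub : R) : R :=
  / sqrt (1 + k * ub ^ 2 + mu * ub ^ (d + 1)).

Definition lambda_crit (d : nat) (kappa l : R) : R :=
  Rpower ((INR d - 1) ^ d * kappa ^ 2 / (2 ^ (d + 1) * INR d * l ^ (d - 1)))
         (2 / (INR d - 1)).

From Stdlib Require Import Reals Lra Lia.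
From Coquelicot Require Import Coquelicot.
Open Scope R_scope.

(* Suppose lambda >= lambda_crit and let G(u) = int_0^u rhs.  The substitution
   u = c phi^(-2/(d-1)) (crit_profile, with c chosen so that phi^2 u^(d+1) = c^(d-1) u^2)
   turns the two radicands into the same expression up to the factor lambda / lambda_crit
   on one term, so that pointwise lhs(phi) <= l |du/dphi| rhs(u(phi)), with equality when
   lambda = lambda_crit.  Integrating over [phi(u), phio] and using the equation gives
   G(u) + G(u(phio)) <= G(u(phi(u))) when phi(u) <= phio, while G(u) <= 0 otherwise; so
   G is unbounded on [0, oo).  But lhs <= 1 / sqrt(radicand_floor) bounds the left-hand
   side of the equation, hence G, by phio / (l sqrt(radicand_floor)). *)

Lemma Rpower_gt0 (x y : R) : 0 < Rpower x y.
Proof. apply exp_pos. Qed.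

Lemma Rpower_two (x : R) : 0 < x -> Rpower x 2 = x ^ 2.
Proof. intros Hx. replace 2 with (INR 2) by (simpl; ring). apply Rpower_pow, Hx. Qed.

Lemma pow_Rpower (x y : R) (n : nat) : Rpower x y ^ n = Rpower x (y * INR n).
Proof. rewrite <- Rpower_pow by apply Rpower_gt0. apply Rpower_mult. Qed.

Lemma RInt_le_comp_decreasing (f g v dv : R -> R) (a b : R) :
  a <= b -> ex_RInt f a b -> ex_RInt g (v b) (v a) ->
  (forall x, a <= x <= b -> continuous g (v x)) ->
  (forall x, a <= x <= b -> is_derive v x (dv x) /\ continuous dv x) ->
  (forall x, a < x < b -> f x <= - dv x * g (v x)) ->
  RInt f a b <= RInt g (v b) (v a).
Proof.
  intros Hab Hf Hg Hgv Hv Hle.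
  assert (Hcomp := is_RInt_comp g v dv a b).
  rewrite Rmin_left, Rmax_right in Hcomp by exact Hab.
  specialize (Hcomp Hgv Hv).
  rewrite <- (opp_RInt_swap _ _ _ (ex_RInt_swap _ _ _ Hg)).
  assert (Hopp := is_RInt_opp _ _ _ _ Hcomp).
  apply (is_RInt_le _ _ _ _ _ _ Hab (RInt_correct _ _ _ Hf) Hopp).
  intros x Hx. specialize (Hle x Hx). unfold opp, scal; simpl; unfold mult; simpl. lra.
Qed.

Lemma no_bounded_uniform_increase (P : R -> Prop) (G : R -> R) (delta M u0 : R) :
  0 < delta -> P u0 ->
  (forall u, P u -> G u <= M) ->
  (forall u, P u -> exists w, P w /\ G u + delta <= G w) ->
  False.
Proof.
  intros Hdelta Hu0 Hbound Hstep.
  assert (Hiter : forall n, exists w, P w /\ G u0 + INR n * delta <= G w).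
  { induction n as [|n [w [Hw Hgw]]].
    - exists u0. simpl. split; [exact Hu0 | lra].
    - destruct (Hstep w Hw) as [w' [Hw' Hgw']].
      exists w'. rewrite S_INR. split; [exact Hw' | lra]. }
  destruct (INR_archimed delta (M - G u0) Hdelta) as [n Hn].
  destruct (Hiter n) as [w [Hw Hgw]].
  specialize (Hbound w Hw). lra.
Qed.

Section DomainWall.

Variables (d : nat) (kappa l lambda k mu : R).
Hypotheses (Hd : (2 <= d)%nat) (Hkappa : 0 < kappa) (Hl : 0 < l) (Hlambda : 0 < lambda)
  (Hk : 0 <= k) (Hmu : 0 < mu).

Local Notation D := (INR d).
Local Notation lhs := (lhs_integrand d kappa l lambda k mu).
Local Notation rhs := (rhs_integrand d k mu).

Lemma INR_d_ge2 : 2 <= D.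
Proof. replace 2 with (INR 2) by (simpl; ring). apply le_INR, Hd. Qed.

Lemma INR_d_pred : INR (d - 1) = D - 1.
Proof. rewrite minus_INR by lia. reflexivity. Qed.

Definition radicand_floor : R := D * (D - 1) / (kappa ^ 2 * l ^ 2) * mu.

Definition lhs_radicand (p : R) : R :=
  radicand_floor + k * ((D - 1) ^ 2 / (4 * l ^ 2)) * p ^ 2
  + lambda * Rpower p (2 * (D + 1) / (D - 1)).

Definition rhs_radicand (u : R) : R := 1 + k * u ^ 2 + mu * u ^ (d + 1).

Lemma lhs_integrandE (p : R) : lhs p = / sqrt (lhs_radicand p).
Proof. reflexivity. Qed.

Lemma rhs_integrandE (u : R) : rhs u = / sqrt (rhs_radicand u).
Proof. reflexivity. Qed.

Lemma radicand_floor_gt0 : 0 < radicand_floor.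
Proof.
  pose proof INR_d_ge2. unfold radicand_floor.
  apply Rmult_lt_0_compat; [apply Rdiv_lt_0_compat|]; try apply Rmult_lt_0_compat;
    try apply pow_lt; lra.
Qed.

Lemma lhs_radicand_ge_floor (p : R) : radicand_floor <= lhs_radicand p.
Proof.
  pose proof INR_d_ge2. unfold lhs_radicand.
  assert (0 <= (D - 1) ^ 2 / (4 * l ^ 2)) by
    (apply Rle_mult_inv_pos; [apply pow2_ge_0 | apply Rmult_lt_0_compat, pow_lt; lra]).
  assert (0 <= k * ((D - 1) ^ 2 / (4 * l ^ 2)) * p ^ 2) by
    (apply Rmult_le_pos; [apply Rmult_le_pos; lra | apply pow2_ge_0]).
  pose proof (Rpower_gt0 p (2 * (D + 1) / (D - 1))).
  nra.
Qed.

Lemma lhs_radicand_gt0 (p : R) : 0 < lhs_radicand p.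
Proof. apply (Rlt_le_trans _ _ _ radicand_floor_gt0), lhs_radicand_ge_floor. Qed.

Lemma rhs_radicand_gt0 (u : R) : 0 <= u -> 0 < rhs_radicand u.
Proof.
  intros Hu. unfold rhs_radicand.
  assert (0 <= u ^ 2) by apply pow2_ge_0.
  assert (0 <= u ^ (d + 1)) by (apply pow_le; exact Hu).
  nra.
Qed.

Lemma lhs_integrand_le_floor (p : R) : lhs p <= / sqrt radicand_floor.
Proof.
  rewrite lhs_integrandE. apply Rinv_le_contravar; [apply sqrt_lt_R0, radicand_floor_gt0|].
  apply sqrt_le_1_alt, lhs_radicand_ge_floor.
Qed.

Lemma lhs_integrand_gt0 (p : R) : 0 < lhs p.
Proof. rewrite lhs_integrandE. apply Rinv_0_lt_compat, sqrt_lt_R0, lhs_radicand_gt0. Qed.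

Lemma rhs_integrand_gt0 (u : R) : 0 <= u -> 0 < rhs u.
Proof. intros Hu. rewrite rhs_integrandE. apply Rinv_0_lt_compat, sqrt_lt_R0, rhs_radicand_gt0, Hu. Qed.

Lemma lhs_integrand_continuous (p : R) : 0 < p -> continuous lhs p.
Proof.
  intros Hp. apply (ex_derive_continuous (K := R_AbsRing) (V := R_NormedModule)).
  pose proof (lhs_radicand_gt0 p) as HP. unfold lhs_radicand, radicand_floor, Rpower in HP.
  unfold lhs_integrand, Rpower. auto_derive.
  repeat split; try exact Hp; try exact HP.
  apply Rgt_not_eq, sqrt_lt_R0, HP.
Qed.

Lemma rhs_integrand_continuous (u : R) : 0 <= u -> continuous rhs u.
Proof.
  intros Hu. apply (ex_derive_continuous (K := R_AbsRing) (V := R_NormedModule)).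
  pose proof (rhs_radicand_gt0 u Hu) as HQ. unfold rhs_radicand in HQ.
  unfold rhs_integrand. auto_derive.
  simpl in HQ. repeat split; try exact HQ.
  apply Rgt_not_eq, sqrt_lt_R0, HQ.
Qed.

Lemma ex_RInt_lhs (a b : R) : 0 < a -> 0 < b -> ex_RInt lhs a b.
Proof.
  intros Ha Hb. apply (ex_RInt_continuous (V := R_CompleteNormedModule)). intros z Hz.
  apply lhs_integrand_continuous. pose proof (Rmin_glb_lt a b 0 Ha Hb). lra.
Qed.

Lemma ex_RInt_rhs (a b : R) : 0 <= a -> 0 <= b -> ex_RInt rhs a b.
Proof.
  intros Ha Hb. apply (ex_RInt_continuous (V := R_CompleteNormedModule)). intros z Hz.
  apply rhs_integrand_continuous. pose proof (Rmin_glb a b 0 Ha Hb). lra.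
Qed.

Definition rhs_integral (u : R) : R := RInt rhs 0 u.

Lemma rhs_integral_gt0 (u : R) : 0 < u -> 0 < rhs_integral u.
Proof.
  intros Hu. apply RInt_gt_0; [exact Hu | |].
  - intros x Hx. apply rhs_integrand_gt0. lra.
  - intros x Hx. apply rhs_integrand_continuous. lra.
Qed.

Lemma RInt_rhs_eq_sub (a b : R) : 0 <= a -> 0 <= b -> RInt rhs a b = rhs_integral b - rhs_integral a.
Proof.
  intros Ha Hb. unfold rhs_integral.
  rewrite <- (RInt_Chasles rhs 0 a b) by (apply ex_RInt_rhs; lra).
  unfold plus; simpl. lra.
Qed.

Definition crit_exponent : R := 2 / (D - 1).
Definition crit_base : R := 4 * D / ((D - 1) * kappa ^ 2).
Definition crit_scale : R := Rpower crit_base (/ (D - 1)).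
Definition crit_profile (p : R) : R := crit_scale * Rpower p (- crit_exponent).

Lemma crit_exponent_gt0 : 0 < crit_exponent.
Proof. pose proof INR_d_ge2. apply Rdiv_lt_0_compat; lra. Qed.

Lemma crit_base_gt0 : 0 < crit_base.
Proof.
  pose proof INR_d_ge2. unfold crit_base.
  apply Rdiv_lt_0_compat; [lra | apply Rmult_lt_0_compat, pow_lt; lra].
Qed.

Lemma crit_profile_gt0 (p : R) : 0 < crit_profile p.
Proof. apply Rmult_lt_0_compat; apply Rpower_gt0. Qed.

Lemma crit_profile_mul_Rpower (p : R) : crit_profile p * Rpower p crit_exponent = crit_scale.
Proof.
  unfold crit_profile. rewrite Rmult_assoc, <- Rpower_plus.
  replace (- crit_exponent + crit_exponent) with 0 by ring.
  unfold Rpower. rewrite Rmult_0_l, exp_0. ring.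
Qed.

Lemma crit_scale_pow_pred : crit_scale ^ (d - 1) = crit_base.
Proof.
  pose proof INR_d_ge2. unfold crit_scale.
  rewrite pow_Rpower, INR_d_pred, Rinv_l by lra. apply Rpower_1, crit_base_gt0.
Qed.

Lemma crit_scale_sqr : crit_scale ^ 2 = Rpower crit_base crit_exponent.
Proof.
  unfold crit_scale, crit_exponent. rewrite pow_Rpower. f_equal. simpl. field.
  pose proof INR_d_ge2. lra.
Qed.

Lemma Rpower_crit_exponent_pow_pred (p : R) : 0 < p -> Rpower p crit_exponent ^ (d - 1) = p ^ 2.
Proof.
  intros Hp. pose proof INR_d_ge2. rewrite pow_Rpower, INR_d_pred, <- Rpower_two by exact Hp.
  f_equal. unfold crit_exponent. field. lra.
Qed.

Lemma Rpower_lhs_exponent (p : R) :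
  0 < p -> Rpower p (2 * (D + 1) / (D - 1)) = p ^ 2 * Rpower p crit_exponent ^ 2.
Proof.
  intros Hp. pose proof INR_d_ge2.
  replace (2 * (D + 1) / (D - 1)) with (2 + crit_exponent * INR 2)
    by (unfold crit_exponent; simpl; field; lra).
  rewrite Rpower_plus, Rpower_two, pow_Rpower by exact Hp. reflexivity.
Qed.

Lemma crit_profile_pow_succ (p : R) :
  0 < p -> p ^ 2 * crit_profile p ^ (d + 1) = crit_base * crit_profile p ^ 2.
Proof.
  intros Hp.
  replace (d + 1)%nat with (d - 1 + 2)%nat by lia.
  rewrite pow_add, <- crit_scale_pow_pred, <- (crit_profile_mul_Rpower p), Rpow_mult_distr,
    Rpower_crit_exponent_pow_pred by exact Hp.
  ring.
Qed.

Lemma lambda_crit_mul_scale : lambda_crit d kappa l * (l * crit_exponent * crit_scale) ^ 2 = 1.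
Proof.
  pose proof INR_d_ge2.
  assert (Hprod : (D - 1) ^ d * kappa ^ 2 / (2 ^ (d + 1) * D * l ^ (d - 1)) * crit_base
                  = ((D - 1) / (2 * l)) ^ (d - 1)).
  { unfold crit_base, Rdiv. rewrite Rpow_mult_distr, pow_inv, Rpow_mult_distr.
    assert (Hpow : (D - 1) ^ d = (D - 1) ^ (d - 1) * (D - 1)).
    { rewrite Rmult_comm, tech_pow_Rmult. f_equal. lia. }
    replace (d + 1)%nat with (d - 1 + 2)%nat by lia.
    rewrite Hpow, pow_add. simpl. field.
    repeat split; try apply pow_nonzero; lra. }
  assert (Hx : 0 < (D - 1) / (2 * l)) by (apply Rdiv_lt_0_compat; lra).
  unfold lambda_crit. fold crit_exponent.
  rewrite Rpow_mult_distr, crit_scale_sqr, (Rmult_comm ((l * crit_exponent) ^ 2)), <- Rmult_assoc,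
    Rpower_mult_distr, Hprod, <- Rpower_pow, Rpower_mult, INR_d_pred.
  - replace ((D - 1) * crit_exponent) with 2 by (unfold crit_exponent; field; lra).
    rewrite Rpower_two by exact Hx. unfold crit_exponent. field. lra.
  - exact Hx.
  - apply Rdiv_lt_0_compat; [apply Rmult_lt_0_compat|]; repeat apply Rmult_lt_0_compat;
      try apply pow_lt; lra.
  - exact crit_base_gt0.
Qed.

Lemma is_derive_crit_profile (p : R) :
  0 < p -> is_derive crit_profile p (- crit_exponent * crit_profile p / p).
Proof. intros Hp. unfold crit_profile, Rpower. auto_derive; [lra | field; lra]. Qed.

Lemma crit_profile_derive_continuous (p : R) :
  0 < p -> continuous (fun x => - crit_exponent * crit_profile x / x) p.
Proof.
  intros Hp. apply (ex_derive_continuous (K := R_AbsRing) (V := R_NormedModule)).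
  unfold crit_profile, Rpower. auto_derive. lra.
Qed.

Hypothesis Hcrit : lambda_crit d kappa l <= lambda.

Lemma radicand_crit_profile_le (p : R) :
  0 < p ->
  p ^ 2 * rhs_radicand (crit_profile p)
  <= (l * crit_exponent * crit_profile p) ^ 2 * lhs_radicand p.
Proof.
  intros Hp. pose proof INR_d_ge2.
  pose proof (crit_profile_pow_succ p Hp) as Hpow.
  pose proof (crit_profile_mul_Rpower p) as Hmul.
  set (v := crit_profile p) in *. set (q := crit_exponent) in *.
  assert (Hscale : 1 <= lambda * (l * q * crit_scale) ^ 2).
  { rewrite <- lambda_crit_mul_scale. apply Rmult_le_compat_r; [apply pow2_ge_0 | exact Hcrit]. }
  assert (Hrhs : p ^ 2 * rhs_radicand v = p ^ 2 + k * p ^ 2 * v ^ 2 + mu * (crit_base * v ^ 2)).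
  { unfold rhs_radicand. rewrite <- Hpow. ring. }
  assert (Hlhs : (l * q * v) ^ 2 * lhs_radicand p
                 = mu * (crit_base * v ^ 2) + k * p ^ 2 * v ^ 2
                   + lambda * (l * q * crit_scale) ^ 2 * p ^ 2).
  { unfold lhs_radicand. rewrite Rpower_lhs_exponent, <- Hmul by exact Hp.
    unfold q, crit_exponent, crit_base, radicand_floor. field. lra. }
  rewrite Hrhs, Hlhs.
  assert (0 <= p ^ 2) by apply pow2_ge_0.
  nra.
Qed.

Lemma lhs_integrand_le_crit_profile (p : R) :
  0 < p -> lhs p <= crit_exponent * crit_profile p / p * (l * rhs (crit_profile p)).
Proof.
  intros Hp.
  assert (HP := lhs_radicand_gt0 p).
  assert (HQ := rhs_radicand_gt0 (crit_profile p) (Rlt_le _ _ (crit_profile_gt0 p))).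
  assert (Hw : 0 < l * crit_exponent * crit_profile p).
  { apply Rmult_lt_0_compat; [apply Rmult_lt_0_compat|].
    - exact Hl.
    - exact crit_exponent_gt0.
    - apply crit_profile_gt0. }
  assert (Hsqrt : p * sqrt (rhs_radicand (crit_profile p))
                  <= l * crit_exponent * crit_profile p * sqrt (lhs_radicand p)).
  { assert (Hsqrt_mul : forall x y, 0 <= x -> 0 < y -> x * sqrt y = sqrt (x ^ 2 * y)).
    { intros x y Hx Hy. rewrite sqrt_mult, sqrt_pow2 by (apply pow2_ge_0 || lra). reflexivity. }
    rewrite !Hsqrt_mul by lra.
    apply sqrt_le_1_alt, radicand_crit_profile_le, Hp. }
  pose proof (sqrt_lt_R0 _ HP). pose proof (sqrt_lt_R0 _ HQ).
  rewrite lhs_integrandE, rhs_integrandE.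
  apply (Rmult_le_reg_r (p * sqrt (lhs_radicand p) * sqrt (rhs_radicand (crit_profile p))));
    [repeat apply Rmult_lt_0_compat; lra|].
  replace (/ sqrt (lhs_radicand p) * (p * sqrt (lhs_radicand p) * sqrt (rhs_radicand (crit_profile p))))
    with (p * sqrt (rhs_radicand (crit_profile p))) by (field; lra).
  replace (crit_exponent * crit_profile p / p * (l * / sqrt (rhs_radicand (crit_profile p)))
           * (p * sqrt (lhs_radicand p) * sqrt (rhs_radicand (crit_profile p))))
    with (l * crit_exponent * crit_profile p * sqrt (lhs_radicand p)) by (field; lra).
  exact Hsqrt.
Qed.

Lemma RInt_lhs_le_crit_profile (p1 p2 : R) :
  0 < p1 -> p1 <= p2 ->
  RInt lhs p1 p2 <= l * (rhs_integral (crit_profile p1) - rhs_integral (crit_profile p2)).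
Proof.
  intros Hp1 Hp12.
  assert (Hv : forall p, 0 <= crit_profile p) by (intros p; apply Rlt_le, crit_profile_gt0).
  rewrite <- RInt_rhs_eq_sub by apply Hv.
  replace (l * RInt rhs (crit_profile p2) (crit_profile p1))
    with (RInt (fun y => l * rhs y) (crit_profile p2) (crit_profile p1))
    by (apply (RInt_scal (V := R_CompleteNormedModule)), ex_RInt_rhs; apply Hv).
  apply (RInt_le_comp_decreasing _ _ _ (fun x => - crit_exponent * crit_profile x / x)).
  - exact Hp12.
  - apply ex_RInt_lhs; lra.
  - apply (ex_RInt_scal (V := R_NormedModule)), ex_RInt_rhs; apply Hv.
  - intros x _. exact (continuous_scal_r l _ _ (rhs_integrand_continuous _ (Hv x))).
  - intros x Hx. split.
    + apply is_derive_crit_profile. lra.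
    + apply crit_profile_derive_continuous. lra.
  - intros x Hx. eapply Rle_trans; [apply lhs_integrand_le_crit_profile; lra |].
    right. unfold Rdiv. ring.
Qed.

Section RegularSolution.

Variables (phio : R) (phi : R -> R).
Hypotheses (Hphio : 0 < phio) (Hphi : forall u, 0 <= u -> 0 < phi u)
  (Hsol : forall u, 0 <= u -> RInt lhs phio (phi u) = - l * rhs_integral u).

Lemma rhs_integral_below (u : R) :
  0 <= u -> phi u <= phio -> l * rhs_integral u = RInt lhs (phi u) phio.
Proof.
  intros Hu Hle. rewrite <- opp_RInt_swap by (apply ex_RInt_lhs; auto).
  rewrite Hsol by exact Hu. unfold opp; simpl. ring.
Qed.

Lemma rhs_integral_above (u : R) : 0 <= u -> phio < phi u -> rhs_integral u <= 0.
Proof.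
  intros Hu Hlt.
  assert (Hpos : 0 <= RInt lhs phio (phi u)).
  { apply RInt_ge_0; [lra | apply ex_RInt_lhs; auto |].
    intros x _. apply Rlt_le, lhs_integrand_gt0. }
  rewrite Hsol in Hpos by exact Hu. nra.
Qed.

Lemma rhs_integral_bounded (u : R) : 0 <= u -> rhs_integral u <= phio / (l * sqrt radicand_floor).
Proof.
  intros Hu.
  assert (HA := sqrt_lt_R0 _ radicand_floor_gt0).
  assert (Hbound : 0 < phio / (l * sqrt radicand_floor))
    by (apply Rdiv_lt_0_compat; [| apply Rmult_lt_0_compat]; assumption).
  destruct (Rle_or_lt (phi u) phio) as [Hle | Hlt].
  - assert (Hint : RInt lhs (phi u) phio <= RInt (fun _ => / sqrt radicand_floor) (phi u) phio).
    { apply RInt_le; [exact Hle | apply ex_RInt_lhs; auto | apply ex_RInt_const |].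
      intros x _. apply lhs_integrand_le_floor. }
    rewrite RInt_const, <- rhs_integral_below in Hint by assumption.
    unfold scal in Hint; simpl in Hint; unfold mult in Hint; simpl in Hint.
    specialize (Hphi u Hu).
    apply (Rmult_le_reg_l l); [exact Hl |].
    replace (l * (phio / (l * sqrt radicand_floor))) with (phio * / sqrt radicand_floor)
      by (field; lra).
    assert (0 < / sqrt radicand_floor) by (apply Rinv_0_lt_compat, HA).
    nra.
  - pose proof (rhs_integral_above u Hu Hlt). lra.
Qed.

Lemma rhs_integral_increment (u : R) :
  0 <= u -> exists w, 0 <= w /\ rhs_integral u + rhs_integral (crit_profile phio) <= rhs_integral w.
Proof.
  intros Hu. destruct (Rle_or_lt (phi u) phio) as [Hle | Hlt].
  - exists (crit_profile (phi u)). split; [apply Rlt_le, crit_profile_gt0 |].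
    pose proof (RInt_lhs_le_crit_profile (phi u) phio (Hphi u Hu) Hle) as Hcmp.
    rewrite <- rhs_integral_below in Hcmp by assumption.
    apply (Rmult_le_reg_l l); [exact Hl | lra].
  - exists (crit_profile phio). split; [apply Rlt_le, crit_profile_gt0 |].
    pose proof (rhs_integral_above u Hu Hlt). lra.
Qed.

End RegularSolution.

End DomainWall.

Theorem mainTheorem11 (d : nat) (kappa l lambda k mu phio : R) (phi : R -> R) :
  (2 <= d)%nat ->
  0 < kappa -> 0 < l -> 0 < lambda ->
  (k = 0 \/ k = 1) ->
  0 < mu -> 0 < phio ->
  (forall u, 0 <= u -> 0 < phi u) ->
  (forall u, 0 <= u ->
     filterlim phi (within (fun x => 0 <= x) (locally u)) (locally (phi u))) ->
  phi 0 = phio ->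
  is_lim phi p_infty 0 ->
  (forall u, 0 <= u ->
     RInt (lhs_integrand d kappa l lambda k mu) phio (phi u)
     = - l * RInt (rhs_integrand d k mu) 0 u) ->
  lambda < lambda_crit d kappa l.
Proof.
  intros Hd Hkappa Hl Hlambda Hk01 Hmu Hphio Hphi _ _ _ Hsol.
  destruct (Rlt_or_le lambda (lambda_crit d kappa l)) as [Hlt | Hcrit]; [exact Hlt | exfalso].
  assert (Hk : 0 <= k) by (destruct Hk01; lra).
  apply (no_bounded_uniform_increase (fun u => 0 <= u) (rhs_integral d k mu)
           (rhs_integral d k mu (crit_profile d kappa phio))
           (phio / (l * sqrt (radicand_floor d kappa l mu))) 0).
  - apply rhs_integral_gt0, crit_profile_gt0; assumption.
  - apply Rle_refl.
  - intros u Hu. apply (rhs_integral_bounded d kappa l lambda k mu) with phi; assumption.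
  - intros u Hu. apply (rhs_integral_increment d kappa l lambda k mu) with phi; assumption.
Qed.
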